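(* Let $L\ge1$ be an integer, $\gamma\in(0,1)$, $r\in[0,\frac{L}{L+1})$ and $n\in\mathbb{N}$ with $rn\in\mathbb{N}$. There exists $q(n,r,L,\gamma)$ such that for every $q\ge q(n,r,L,\gamma)$ the following holds: if $\epsilon\ge0$ is an integer with $(L-1)(\epsilon+1)\le\lfloor rn/L\rfloor$ and $C\subseteq[q]^n$ is an $(r,L)$ list-decodable code with $|C|=q^{\,n-\lfloor\frac{L+1}{L}rn\rfloor-\epsilon}$, then $C$ contains a subcode $C'\subseteq C$ with $|C'|\ge\gamma|C|$ and minimum distance at least $\lfloor\frac{L+1}{L}rn\rfloor-(L-1)(\epsilon+1)+1$.
   Context: $[q]=\{1,\dots,q\}$; a code is a subset of $[q]^n$, its minimum distance is the minimum Hamming distance (number of differing coordinates) between distinct codewords. $C$ is $(r,L)$ list-decodable if every Hamming ball of radius $rn$ in $[q]^n$ contains at most $L$ codewords. *)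

From HB Require Import structures.
From mathcomp Require Import all_boot all_order all_algebra.
From mathcomp Require Import reals.
Set Implicit Arguments. Unset Strict Implicit. Unset Printing Implicit Defensive.
Import Order.TTheory GRing.Theory Num.Theory.
Local Open Scope ring_scope.

Definition word (q n : nat) := {ffun 'I_n -> 'I_q}.

Definition hamming (q n : nat) (x y : word q n) : nat :=
  #|[set i : 'I_n | x i != y i]|.

Definition list_decodable (R : realType) (q n : nat) (C : {set word q n})
    (r : R) (L : nat) : Prop :=
  forall y : word q n,
    (#|[set c in C | ((hamming c y)%:R <= r * n%:R)%R]| <= L)%N.

Definition min_dist_ge (q n : nat) (C : {set word q n}) (d : int) : Prop :=
  forall c1 c2, c1 \in C -> c2 \in C -> c1 != c2 -> d <= (hamming c1 c2)%:Z.

From HB Require Import structures.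
From mathcomp Require Import all_boot all_order all_algebra.
From mathcomp Require Import reals.
From mathcomp Require Import zify lra.
Import Order.TTheory GRing.Theory Num.Theory.
Set Implicit Arguments. Unset Strict Implicit. Unset Printing Implicit Defensive.

(* Write k = rn, D = floor((L+1)k/L) - (L-1)(eps+1) and p = n - floor((L+1)k/L) - eps - 1,
   so that |C| = q^(p+1). Remove from C every codeword c1 having another codeword c2 within
   distance D; what remains has minimum distance > D. Each removed c1 is "rare" on some set P
   of p coordinates on which c1 and c2 agree: at most L codewords agree with c1 on P. Otherwise
   c1, c2 and L-1 further codewords agreeing with c1 on P could all be brought within distance
   k of a single word y (y copies c1 on a set of n - D coordinates and shares the remaining D
   coordinates among the L+1 codewords), contradicting (r,L) list decodability. For a fixed P
   at most L q^p codewords are rare on P, so at most 2^n L q^p codewords are removed, a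
   fraction 2^n L / q <= 1 - gamma of C once q is large. *)

Lemma exists_subset_card (T : finType) (A : {set T}) m :
  m <= #|A| -> exists2 B : {set T}, B \subset A & #|B| = m.
Proof.
move/card_geqP=> [s [us ss sA]]; exists [set x in s].
  by apply/subsetP=> x; rewrite inE => /sA.
by rewrite cardsE (card_uniqP us).
Qed.

Lemma leq_card_bigcup (I T : finType) (P : pred I) (F : I -> {set T}) :
  #|\bigcup_(i | P i) F i| <= \sum_(i | P i) #|F i|.
Proof.
apply: (big_ind2 (fun (A : {set T}) m => #|A| <= m)) => [|A a B b hA hB|//].
  by rewrite cards0.
exact: leq_trans (leq_card_setU A B) (leq_add hA hB).
Qed.

Lemma card_light_fibres (T U : finType) (f : T -> U) (A : {set T}) L :
  #|[set x in A | #|[set x' in A | f x' == f x]| <= L]| <= #|U| * L.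
Proof.
set B := [set x in A | _].
have -> : B = \bigcup_(u : U) [set x in B | f x == u].
  apply/setP=> x; apply/idP/bigcupP => [xB | [u _]]; last by rewrite inE => /andP[].
  by exists (f x); rewrite // inE xB /=.
apply: leq_trans (leq_card_bigcup _ _) _; rewrite -sum_nat_const; apply: leq_sum => u _.
case: (set_0Vmem [set x in B | f x == u]) => [-> | [x0]]; first by rewrite cards0.
rewrite !inE => /andP [/andP [x0A x0L] /eqP <-]; apply: leq_trans x0L.
by apply: subset_leq_card; apply/subsetP=> x; rewrite !inE => /andP [/andP [-> _] ->].
Qed.

Lemma exists_patch (I : finType) (A : eqType) (S : {set I}) (b : {ffun I -> A})
    (ws : seq ({ffun I -> A} * nat)) :
  \sum_(w <- ws) w.2 <= #|S| ->
  exists y : {ffun I -> A}, {in ~: S, y =1 b} /\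
    forall w, w \in ws -> w.2 <= #|[set i in S | y i == w.1 i]|.
Proof.
elim: ws S => [|w ws IH] S; first by exists b.
rewrite big_cons => hS.
have [T TS cT] := exists_subset_card (leq_trans (leq_addr _ _) hS).
have [|y' [y'out y'in]] := IH (S :\: T).
  by rewrite cardsDS // cT leq_subRL ?(leq_trans (leq_addr _ _) hS).
exists [ffun i => if i \in T then w.1 i else y' i]; split.
  move=> i iS; have iT : i \notin T by apply: contraL iS => /(subsetP TS); rewrite inE negbK.
  by rewrite ffunE (negbTE iT) y'out // setCD inE iS.
move=> w'; rewrite inE => /predU1P [-> | w'ws].
  rewrite -cT; apply/subset_leq_card/subsetP=> i iT.
  by rewrite inE (subsetP TS) //= ffunE iT.
apply: leq_trans (y'in _ w'ws) (subset_leq_card _); apply/subsetP=> i.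
by rewrite !inE ffunE => /andP [/andP [/negbTE -> ->]].
Qed.

Section Words.

Variables q n : nat.
Implicit Types (c y : word q n) (C : {set word q n}) (P Y Z : {set 'I_n}).

Lemma hamming_agree_compl c y Z t :
  {in Z, c =1 y} -> t <= #|[set i in ~: Z | y i == c i]| -> hamming c y + t <= #|~: Z|.
Proof.
move=> cyZ /(leq_add (leqnn (hamming c y)))/leq_trans; apply.
rewrite -(cardsID [set i | c i != y i] (~: Z)) leq_add //.
  apply/subset_leq_card/subsetP => i; rewrite !inE => ne; rewrite ne andbT.
  by apply/negP => iZ; rewrite cyZ ?eqxx in ne.
by apply/subset_leq_card/subsetP => i; rewrite !inE eq_sym => /andP [-> ->].
Qed.

Definition restrict P c : {ffun 'I_#|P| -> 'I_q} := [ffun j => c (enum_val j)].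

Lemma restrict_eq_in P c c' : restrict P c = restrict P c' -> {in P, c =1 c'}.
Proof.
move=> e i iP; have := congr1 (fun f : {ffun _} => f (enum_rank_in iP i)) e.
by rewrite !ffunE enum_rankK_in.
Qed.

Definition rare_on C P L :=
  [set c in C | #|[set c' in C | restrict P c' == restrict P c]| <= L].

Lemma card_rare_on C P L : #|rare_on C P L| <= q ^ #|P| * L.
Proof. by have := card_light_fibres (restrict P) C L; rewrite card_ffun !card_ord. Qed.

Definition list_decodable_at C k L :=
  forall y, #|[set c in C | hamming c y <= k]| <= L.

(* Each listed codeword is given its quota of the coordinates outside [Y]:
   [g] each for [c1] and [c2], which agree on [Y], and [h] for the others. *)
Lemma exists_common_center Y P c1 c2 (s : seq (word q n)) k g h :
  P \subset Y -> {in Y, c1 =1 c2} -> (forall c, c \in s -> {in P, c =1 c1}) ->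
  #|~: Y| = k + g -> #|~: P| = k + h -> g + size s * h <= k ->
  exists y, forall c, c \in [:: c1, c2 & s] -> hamming c y <= k.
Proof.
move=> PY c12 sP cY cP quotas.
pose ws := [:: (c1, g), (c2, g) & [seq (c, h) | c <- s]].
have [|y [yc1 quota]] := @exists_patch _ _ (~: Y) c1 ws.
  by rewrite !big_cons big_map big_const_seq count_predT iter_addn_0 cY /=; lia.
have c1y : {in Y, c1 =1 y} by move=> i iY; rewrite yc1 // setCK.
have quota_Y c t : (c, t) \in ws -> {in Y, c =1 y} -> hamming c y <= k + g - t.
  by move=> /quota /= hc /hamming_agree_compl /(_ hc); rewrite cY; lia.
exists y => c; rewrite !inE => /or3P [/eqP -> | /eqP -> | cs].
- by rewrite -[k](addnK g); apply: quota_Y; rewrite ?inE ?eqxx.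
- rewrite -[k](addnK g); apply: quota_Y => [|i iY]; first by rewrite !inE eqxx orbT.
  by rewrite -c12 ?c1y.
have cws : (c, h) \in ws by rewrite !inE (map_f (fun c => (c, h))) ?orbT.
have cyP : {in P, c =1 y} by move=> i iP; rewrite sP ?c1y ?(subsetP PY).
have /(hamming_agree_compl cyP) : h <= #|[set i in ~: P | y i == c i]|.
  apply: leq_trans (quota _ cws) (subset_leq_card _); apply/subsetP => i.
  by rewrite !inE => /andP [iY ->]; rewrite andbT; apply: contra iY => /(subsetP PY).
by rewrite cP; lia.
Qed.

Lemma close_codeword_rare C k L p g h c1 c2 :
  n = p + k + h -> g <= h -> g + (L - 1) * h <= k -> list_decodable_at C k L ->
  c1 \in C -> c2 \in C -> c1 != c2 -> hamming c1 c2 <= k + g ->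
  exists2 P : {set 'I_n}, #|P| = p & c1 \in rare_on C P L.
Proof.
move=> en gh hk ldC c1C c2C c12 d12.
pose Ag := [set i | c1 i == c2 i].
have cAg : #|Ag| + hamming c1 c2 = n.
  rewrite -[RHS](card_ord n) -(cardsC Ag); congr (_ + _).
  by apply: eq_card => i; rewrite !inE.
have [Y YAg cY] := @exists_subset_card _ Ag (p + (h - g)) ltac:(lia).
have [P PY cP] := @exists_subset_card _ Y p ltac:(lia).
have cYc : #|~: Y| = k + g by have := cardsC Y; rewrite card_ord; lia.
have cPc : #|~: P| = k + h by have := cardsC P; rewrite card_ord; lia.
exists P => //; rewrite inE c1C leqNgt /=; apply/negP.
set F := [set c' in C | _] => many.
have c1F : c1 \in F by rewrite inE c1C eqxx.
have /card_geqP [s [us ss sF]] : L - 1 <= #|F :\ c1 :\ c2|.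
  rewrite leq_subLR -ltnS; apply: leq_trans many _.
  by rewrite (cardsD1 c1 F) c1F add1n ltnS (cardsD1 c2 (F :\ c1)) -add1n leq_add2r leq_b1.
have sP c : c \in s -> {in P, c =1 c1}.
  by move=> /sF; rewrite !inE => /and4P [_ _ _ /eqP /restrict_eq_in].
have c12Y : {in Y, c1 =1 c2} by move=> i /(subsetP YAg); rewrite inE => /eqP.
have [|y ball] := exists_common_center PY c12Y sP cYc cPc; first by rewrite ss; lia.
have ul : uniq [:: c1, c2 & s].
  rewrite /= us !inE negb_or c12 andbT.
  by apply/andP; split; apply/negP => /sF; rewrite !inE eqxx ?andbF.
have ball_C : [:: c1, c2 & s] \subset [set c in C | hamming c y <= k].
  apply/subsetP => c cl; rewrite inE ball // andbT.
  move: cl; rewrite !inE => /or3P [/eqP -> | /eqP -> | /sF] //.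
  by move=> /setD1P [_ /setD1P [_ /setIdP []]].
have /leq_trans /(_ (ldC y)) := subset_leq_card ball_C.
by rewrite (card_uniqP ul) /= ss; lia.
Qed.

Lemma min_dist_ge_card_le1 C d : #|C| <= 1 -> min_dist_ge C d.
Proof.
move=> C1 c1 c2 c1C c2C c12; move: C1; rewrite leqNgt => /negP [].
by apply/card_gt1P; exists c1, c2.
Qed.

Definition close_to_others C d :=
  [set c in C | [exists c' in C, (c != c') && (hamming c c' <= d)]].

Lemma card_close_to_others C k L p g h :
  n = p + k + h -> g <= h -> g + (L - 1) * h <= k -> list_decodable_at C k L ->
  #|close_to_others C (k + g)| <= 2 ^ n * L * q ^ p.
Proof.
move=> en gh hk ldC.
have : close_to_others C (k + g) \subset \bigcup_(P : {set 'I_n} | #|P| == p) rare_on C P L.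
  apply/subsetP => c1; rewrite inE => /andP [c1C /existsP [c2 /and3P [c2C c12 d12]]].
  have [P cP c1P] := close_codeword_rare en gh hk ldC c1C c2C c12 d12.
  by apply/bigcupP; exists P; rewrite ?cP.
move/subset_leq_card/leq_trans; apply; apply: leq_trans (leq_card_bigcup _ _) _.
apply: leq_trans (_ : _ <= \sum_(P : {set 'I_n} | #|P| == p) (q ^ p * L)) _.
  by apply: leq_sum => P /eqP <-; exact: card_rare_on.
rewrite sum_nat_const mulnAC -mulnA leq_mul2r; apply/orP; right.
apply: leq_trans (max_card _) _.
by rewrite -cardsT -powersetT card_powerset cardsT card_ord.
Qed.

Lemma expurgation C k L p g h :
  n = p + k + h -> g <= h -> g + (L - 1) * h <= k -> list_decodable_at C k L ->
  exists C', [/\ C' \subset C, #|C| <= #|C'| + 2 ^ n * L * q ^ p &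
    forall c1 c2, c1 \in C' -> c2 \in C' -> c1 != c2 -> k + g < hamming c1 c2].
Proof.
move=> en gh hk ldC; set B := close_to_others C (k + g).
exists (C :\: B); split; first exact: subsetDl.
  rewrite -(cardsID B C) addnC leq_add2l.
  exact: leq_trans (subset_leq_card (subsetIr _ _)) (card_close_to_others en gh hk ldC).
move=> c1 c2; rewrite !inE => /andP [c1B c1C] /andP [_ c2C] c12.
rewrite ltnNge; apply: contra c1B => d12; rewrite c1C; apply/existsP; exists c2.
by rewrite c2C c12.
Qed.

End Words.

Local Open Scope ring_scope.

Lemma floor_divn (R : archiFieldType) (a b : nat) :
  (0 < b)%N -> Num.floor (a%:R / b%:R : R) = (a %/ b)%:Z.
Proof.
move=> b0; apply: floor_def; have bR : (0 : R) < b%:R by rewrite ltr0n.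
rewrite -PoszD /intmul ler_pdivlMr // ltr_pdivrMr // -!natrM ler_nat ltr_nat.
by rewrite leq_trunc_div addn1 ltn_ceil.
Qed.

Lemma floor_succ_div (R : archiFieldType) (k L : nat) :
  (0 < L)%N -> Num.floor ((L.+1)%:R / L%:R * k%:R : R) = (k + k %/ L)%:Z.
Proof. by move=> L0; rewrite mulrAC -natrM floor_divn // mulSn addnC mulnC divnMDl. Qed.

Lemma exprz_gt1_gt0 (R : realFieldType) (x : R) (N : int) : 1 <= x -> 1 < x ^ N -> 0 < N.
Proof.
move=> x1; apply: contraTT; rewrite -!leNgt => N0.
by rewrite -[leRHS](expr0z x); apply: ler_weXz2l.
Qed.

Lemma ler_mul_bound (R : archiFieldType) (a b : R) (q : nat) :
  0 < a -> 0 <= b -> (Num.bound (b / a) <= q)%N -> b <= a * q%:R.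
Proof.
move=> a0 b0 bq; rewrite mulrC -ler_pdivrMr //.
have ba : 0 <= b / a := divr_ge0 b0 (ltW a0).
by apply/ltW/(lt_le_trans (archi_boundP ba)); rewrite ler_nat.
Qed.

Lemma expurgated_fraction (R : realFieldType) (gamma : R) (m m' K q p : nat) :
  K%:R <= (1 - gamma) * q%:R -> m%:R = q%:R ^+ p.+1 :> R -> (m <= m' + K * q ^ p)%N ->
  gamma * m%:R <= m'%:R.
Proof.
move=> Kq em.
rewrite -(ler_nat R) natrD natrM natrX em exprS.
have : 0 <= q%:R ^+ p :> R by rewrite exprn_ge0.
move: (q%:R ^+ p) => X X0 le.
have : K%:R * X <= (1 - gamma) * q%:R * X by rewrite ler_wpM2r.
by nra.
Qed.

Lemma list_decodable_at_nat_radius (R : realType) q n (C : {set word q n}) (r : R) L k :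
  r * n%:R = k%:R -> list_decodable C r L -> list_decodable_at C k L.
Proof.
move=> rk ldC y; apply: leq_trans (ldC y); apply/subset_leq_card/subsetP => c.
by rewrite !inE rk ler_nat.
Qed.

Theorem theorem6p1 (R : realType) (L : nat) (gamma r : R) (n : nat) :
  (1 <= L)%N ->
  0 < gamma < 1 ->
  0 <= r -> r < L%:R / (L.+1)%:R ->
  (exists k : nat, r * n%:R = k%:R) ->
  exists q0 : nat, forall q : nat, (q0 <= q)%N ->
    forall (eps : nat) (C : {set word q n}),
      ((L - 1) * (eps + 1))%:Z <= Num.floor (r * n%:R / L%:R) ->
      list_decodable C r L ->
      #|C|%:R = (q%:R : R) ^ (n%:Z - Num.floor ((L.+1)%:R / L%:R * (r * n%:R)) - eps%:Z) ->
      exists C' : {set word q n},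
        [/\ C' \subset C,
            gamma * #|C|%:R <= #|C'|%:R
          & min_dist_ge C'
              (Num.floor ((L.+1)%:R / L%:R * (r * n%:R)) - ((L - 1) * (eps + 1))%:Z + 1)].
Proof.
move=> L1 /andP [g0 g1] _ _ [k rk].
exists (maxn 2 (Num.bound ((2 ^ n * L)%N%:R / (1 - gamma)))) => q qq0 eps C hfl ldC hC.
have Kq : ((2 ^ n * L)%N%:R : R) <= (1 - gamma) * q%:R.
  by apply: ler_mul_bound (leq_trans (leq_maxr _ _) qq0); rewrite ?subr_gt0 ?ler0n.
set f := (k %/ L)%N; set a := ((L - 1) * (eps + 1))%N.
rewrite rk floor_succ_div // in hC *; rewrite rk floor_divn // lez_nat in hfl.
case: (leqP #|C| 1) => [C1 | C2].
  exists C; split => //; last exact: min_dist_ge_card_le1.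
  by rewrite ler_piMl ?ler0n ?ltW.
have N1 : 0 < n%:Z - (k + f)%:Z - eps%:Z.
  apply: (@exprz_gt1_gt0 _ (q%:R : R)); last by rewrite -hC ltr1n.
  by rewrite ler1n ltnW // (leq_trans (leq_maxl _ _) qq0).
set p := (n - (k + f) - eps).-1.
have en : n = (p + k + (f + eps + 1))%N by rewrite /p; lia.
have gh : (f - a <= f + eps + 1)%N by lia.
have hfk : (f - a + (L - 1) * (f + eps + 1) <= k)%N.
  have fLk : (f * L <= k)%N := leq_trunc_div k L.
  have fL : ((L - 1) * f + f = f * L)%N by rewrite -{2}(mul1n f) -mulnDl subnK // mulnC.
  by rewrite -addnA mulnDr -/a; lia.
have [C' [C'C hC' dC']] := expurgation en gh hfk (list_decodable_at_nat_radius rk ldC).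
exists C'; split => //.
  apply: expurgated_fraction Kq _ hC'.
  by rewrite hC (_ : _ - _ - _ = p.+1 :> int) //; rewrite /p; lia.
move=> c1 c2 c1C' c2C' c12; have := dC' _ _ c1C' c2C' c12.
by rewrite /a in hfl *; lia.
Qed.
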